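(* Let $R\in(0,\pi)$ and let $\Omega_R\subset\mathbb{S}^2$ be the closed spherical cap of geodesic radius $R$ centered at the north pole. Let $$\mathfrak{C}_{\Omega_R}=\{u\colon\overline{\Omega_R}\to [0,\infty) \;:\; u|_{\partial\Omega_R}=0,\ u \text{ piecewise } C^1\}.$$ Then $\inf\{R_1[u]\colon u\in\mathfrak{C}_{\Omega_R}\}=0$. Consequently, $R_1$ has no minimizer in $\mathfrak{C}_{\Omega_R}$.
   Context: On $\mathbb{S}^2$ use spherical coordinates $\Psi(\theta,\phi)=(\sin\theta\cos\phi,\sin\theta\sin\phi,\cos\theta)$, $\theta\in[0,\pi]$, $\phi\in[0,2\pi)$, with round metric $d\theta^2+\sin^2\theta\,d\phi^2$, area element $d\Omega=\sin\theta\,d\theta\,d\phi$, and $|\nabla_{\mathbb{S}^2}u|^2=u_\theta^2+u_\phi^2/\sin^2\theta$. A function $u$ on a domain $\Omega\subset\mathbb{S}^2$ describes the radial graph $\{e^{u(\xi)}\xi:\xi\in\Omega\}$. The (scale-invariant free expansion) resistance functional is $$R_1[u]=\int_{\Omega}\frac{1}{1+|\nabla_{\mathbb{S}^2}u|^2}\,d\Omega.$$ *)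

From Stdlib Require Import Reals.
From Coquelicot Require Import Coquelicot.
Open Scope R_scope.

Definition pt3 : Type := (R * R * R)%type.

Definition Psi (theta phi : R) : pt3 :=
  (sin theta * cos phi, sin theta * sin phi, cos theta).

Definition C1_2d (V : R -> R -> R) : Prop :=
  forall x y,
    ex_derive (fun s => V s y) x /\ ex_derive (fun t => V x t) y /\
    continuity_2d_pt (fun s t => Derive (fun s' => V s' t) s) x y /\
    continuity_2d_pt (fun s t => Derive (fun t' => V s t') t) x y.

(* Piecewise C^1 on the closed rectangle [a,b]x[c,d]: there are grid
   partitions a = s_0 < ... < s_m = b and c = t_0 < ... < t_k = d such that
   on each closed cell U coincides with a C^1 function.  (This implies that
   U is continuous on the rectangle.) *)
Definition pw_C1_rect (U : R -> R -> R) (a b c d : R) : Prop :=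
  exists (m k : nat) (s t : nat -> R),
    s 0%nat = a /\ s m = b /\ (forall i, (i < m)%nat -> s i < s (S i)) /\
    t 0%nat = c /\ t k = d /\ (forall j, (j < k)%nat -> t j < t (S j)) /\
    forall i j, (i < m)%nat -> (j < k)%nat ->
      exists V : R -> R -> R, C1_2d V /\
        forall x y, s i <= x <= s (S i) -> t j <= y <= t (S j) -> U x y = V x y.

(* u : S^2 -> R (given as a function on R^3; only its values on the closed
   cap Omega_Rad = { Psi theta phi | 0 <= theta <= Rad } matter).
   The admissible class C_{Omega_Rad}. *)
Definition admissible (Rad : R) (u : pt3 -> R) : Prop :=
  (forall theta phi, 0 <= theta <= Rad -> 0 <= u (Psi theta phi)) /\
  (forall phi, u (Psi Rad phi) = 0) /\
  pw_C1_rect (fun theta phi => u (Psi theta phi)) 0 Rad 0 (2 * PI).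

(* The resistance functional R_1[u] over the cap, written in spherical
   coordinates: d Omega = sin theta dtheta dphi and
   |grad u|^2 = u_theta^2 + u_phi^2 / sin^2 theta. *)
Definition Resist1 (Rad : R) (u : pt3 -> R) : R :=
  let U := fun theta phi => u (Psi theta phi) in
  RInt (fun phi =>
    RInt (fun theta =>
      sin theta /
        (1 + (Derive (fun t => U t phi) theta) ^ 2
           + (Derive (fun p => U theta p) phi) ^ 2 / (sin theta) ^ 2))
      0 Rad)
    0 (2 * PI).

From Stdlib Require Import Reals Lra Psatz.
From Coquelicot Require Import Coquelicot.
Open Scope R_scope.

(* For admissible u the integrand sin θ / (1 + |∇u|²) is positive for
   0 < θ < R and continuous on every cell of the grid on which u is C¹, so
   every cell contributes a positive amount and R₁[u] > 0.  On the other hand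
   the cones u_k = k (R - θ) are admissible with
   R₁[u_k] = 2π (1 - cos R) / (1 + k²), which tends to 0 as k → ∞. *)

Lemma continuity_2d_pt_continuous_l (f : R -> R -> R) (x y : R) :
  continuity_2d_pt f x y -> continuous (fun u => f u y) x.
Proof.
  intros Hf. apply filterlim_locally. intros eps.
  destruct (Hf eps) as [d Hd]. exists d. intros u Hu. apply Hd.
  - exact Hu.
  - rewrite Rminus_eq_0, Rabs_R0. apply cond_pos.
Qed.

Lemma locally_interior_eq (f g : R -> R) (a b x : R) :
  a < x < b -> (forall t, a <= t <= b -> f t = g t) ->
  locally x (fun t => f t = g t).
Proof.
  intros Hx Hfg. assert (Hd : 0 < Rmin (x - a) (b - x)) by (apply Rmin_glb_lt; lra).
  exists (mkposreal _ Hd). intros t Ht. apply Hfg.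
  change (Rabs (t - x) < Rmin (x - a) (b - x)) in Ht. apply Rabs_def2 in Ht.
  pose proof (Rmin_l (x - a) (b - x)). pose proof (Rmin_r (x - a) (b - x)). lra.
Qed.

Lemma increasing_partition_le (s : nat -> R) (m : nat) :
  (forall i, (i < m)%nat -> s i < s (S i)) ->
  forall i j, (i <= j <= m)%nat -> s i <= s j.
Proof.
  intros Hs i j [Hij Hjm]. induction Hij as [|j Hij IH].
  - lra.
  - specialize (IH ltac:(lia)). specialize (Hs j ltac:(lia)). lra.
Qed.

Lemma trans_along_partition (P : R -> R -> Prop) (t : nat -> R) (k : nat) :
  (forall a b c, P a b -> P b c -> P a c) -> (0 < k)%nat ->
  (forall j, (j < k)%nat -> P (t j) (t (S j))) -> P (t 0%nat) (t k).
Proof.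
  intros Htrans Hk Hstep. induction k as [|k IH]; [lia|].
  destruct k as [|k]; [now apply Hstep|].
  apply Htrans with (t (S k)).
  - apply IH; [lia|]. intros j Hj. apply Hstep. lia.
  - apply Hstep. lia.
Qed.

Definition partial1 (U : R -> R -> R) (x y : R) : R := Derive (fun t => U t y) x.
Definition partial2 (U : R -> R -> R) (x y : R) : R := Derive (fun t => U x t) y.

Lemma partial1_eq_on_slice (U V : R -> R -> R) (a b x y : R) :
  a < x < b -> (forall t, a <= t <= b -> U t y = V t y) ->
  partial1 U x y = partial1 V x y.
Proof. intros Hx HUV. apply Derive_ext_loc, (locally_interior_eq _ _ a b); auto. Qed.

Lemma partial2_eq_on_slice (U V : R -> R -> R) (c d x y : R) :
  c < y < d -> (forall t, c <= t <= d -> U x t = V x t) ->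
  partial2 U x y = partial2 V x y.
Proof. intros Hy HUV. apply Derive_ext_loc, (locally_interior_eq _ _ c d); auto. Qed.

Definition resist_density (A B : R -> R -> R) (th ph : R) : R :=
  sin th / (1 + A th ph ^ 2 + B th ph ^ 2 / sin th ^ 2).

Lemma Resist1_density (Rad : R) (u : pt3 -> R) :
  let U := fun th ph => u (Psi th ph) in
  Resist1 Rad u =
  RInt (fun ph => RInt (fun th => resist_density (partial1 U) (partial2 U) th ph) 0 Rad)
    0 (2 * PI).
Proof. reflexivity. Qed.

Lemma resist_denom_ge1 (a b s : R) : 1 <= 1 + a ^ 2 + b ^ 2 / s ^ 2.
Proof.
  assert (0 <= b ^ 2 / s ^ 2) by (unfold Rdiv; rewrite <- pow_inv; nra).
  nra.
Qed.

Lemma resist_density_pos (A B : R -> R -> R) (th ph : R) :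
  0 < sin th -> 0 < resist_density A B th ph.
Proof.
  intros Hs. pose proof (resist_denom_ge1 (A th ph) (B th ph) (sin th)).
  apply Rdiv_lt_0_compat; lra.
Qed.

Lemma abs_resist_density_le (A B : R -> R -> R) (th ph : R) :
  Rabs (resist_density A B th ph) <= Rabs (sin th).
Proof.
  unfold resist_density. set (D := 1 + _ + _).
  assert (HD : 1 <= D) by apply resist_denom_ge1.
  unfold Rdiv. rewrite Rabs_mult, (Rabs_pos_eq (/ D)).
  - assert (/ D <= 1) by (rewrite <- Rinv_1; apply Rinv_le_contravar; lra).
    assert (0 < / D) by (apply Rinv_0_lt_compat; lra).
    pose proof (Rabs_pos (sin th)). nra.
  - left. apply Rinv_0_lt_compat. lra.
Qed.

Lemma continuity_2d_pt_sin (x y : R) : continuity_2d_pt (fun u _ => sin u) x y.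
Proof.
  apply (continuity_1d_2d_pt_comp sin (fun u _ => u)).
  - apply continuity_sin.
  - apply continuity_2d_pt_id1.
Qed.

Lemma resist_density_continuous (A B : R -> R -> R) (x y : R) :
  continuity_2d_pt A x y -> continuity_2d_pt B x y ->
  continuity_2d_pt (resist_density A B) x y.
Proof.
  intros HA HB. destruct (Req_dec (sin x) 0) as [Hs|Hs].
  - (* where sin vanishes the term B^2 / sin^2 is not continuous (Rocq's
       [/ 0] is [0]), but the density is squeezed by |sin| *)
    intros eps. destruct (continuity_2d_pt_sin x y eps) as [d Hd].
    exists d. intros u v Hu Hv. specialize (Hd u v Hu Hv). cbv beta in Hd.
    rewrite Hs, Rminus_0_r in Hd.
    replace (resist_density A B x y) with 0 by (unfold resist_density, Rdiv; rewrite Hs; ring).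
    rewrite Rminus_0_r. eapply Rle_lt_trans; [apply abs_resist_density_le|exact Hd].
  - assert (Hden : 1 + A x y ^ 2 + B x y ^ 2 / sin x ^ 2 <> 0)
      by (pose proof (resist_denom_ge1 (A x y) (B x y) (sin x)); lra).
    unfold resist_density, Rdiv.
    apply continuity_2d_pt_mult; [apply continuity_2d_pt_sin|].
    apply continuity_2d_pt_inv; [|exact Hden].
    apply continuity_2d_pt_plus; [apply continuity_2d_pt_plus|].
    + apply continuity_2d_pt_const.
    + apply (continuity_2d_pt_ext (fun u v => A u v * A u v)); [intros; simpl; ring|].
      now apply continuity_2d_pt_mult.
    + apply (continuity_2d_pt_ext (fun u v => B u v * B u v * / (sin u * sin u))).
      { intros. simpl. rewrite !Rmult_1_r. reflexivity. }
      apply continuity_2d_pt_mult; [now apply continuity_2d_pt_mult|].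
      apply continuity_2d_pt_inv.
      * apply continuity_2d_pt_mult; apply continuity_2d_pt_sin.
      * intros H. apply Hs. nra.
Qed.

Definition pos_param_integral (f : R -> R -> R) (a b c d : R) : Prop :=
  exists G : R -> R,
    (forall p, c <= p <= d -> continuous G p) /\
    forall p, c < p < d -> is_RInt (fun x => f x p) a b (G p) /\ 0 < G p.

Lemma pos_param_integral_chasles (f : R -> R -> R) (a b e c d : R) :
  pos_param_integral f a b c d -> pos_param_integral f b e c d ->
  pos_param_integral f a e c d.
Proof.
  intros [G1 [HG1 IG1]] [G2 [HG2 IG2]]. exists (fun p => G1 p + G2 p). split.
  - intros p Hp. apply (continuous_plus G1 G2); auto.
  - intros p Hp. destruct (IG1 p Hp) as [I1 P1], (IG2 p Hp) as [I2 P2]. split.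
    + exact (is_RInt_Chasles (V := R_NormedModule) _ _ _ _ _ _ I1 I2).
    + lra.
Qed.

Lemma pos_param_integral_ext (f g : R -> R -> R) (a b c d : R) :
  a <= b -> (forall x y, a < x < b -> c < y < d -> f x y = g x y) ->
  pos_param_integral g a b c d -> pos_param_integral f a b c d.
Proof.
  intros Hab Hfg [G [HG IG]]. exists G. split; [exact HG|].
  intros p Hp. destruct (IG p Hp) as [IGp PGp]. split; [|exact PGp].
  apply (is_RInt_ext (fun x => g x p)); [|exact IGp].
  intros x Hx. rewrite Rmin_left, Rmax_right in Hx by lra. symmetry. auto.
Qed.

(* Continuity of the parametric integral comes from uniform continuity of
   [f] on the segments [a, b] × [p0 - δ, p0 + δ]. *)
Lemma pos_param_integral_continuous (f : R -> R -> R) (a b c d : R) :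
  a < b -> (forall x y, continuity_2d_pt f x y) ->
  (forall x y, a < x < b -> 0 < f x y) -> pos_param_integral f a b c d.
Proof.
  intros Hab Hf Hpos.
  assert (Hex : forall p, ex_RInt (fun x => f x p) a b).
  { intros p. apply (@ex_RInt_continuous R_CompleteNormedModule).
    intros z _. apply continuity_2d_pt_continuous_l, Hf. }
  exists (fun p => RInt (fun x => f x p) a b). split.
  - intros p0 _. apply filterlim_locally. intros eps.
    assert (He : 0 < eps / (2 * (b - a))).
    { apply Rdiv_lt_0_compat; [apply cond_pos|lra]. }
    destruct (uniform_continuity_2d_1d f a b p0 (fun x _ => Hf x p0) (mkposreal _ He))
      as [delta Hdelta].
    exists delta. intros p Hp. change (Rabs (p - p0) < delta) in Hp.
    change (Rabs (RInt (fun x => f x p) a b - RInt (fun x => f x p0) a b) < eps).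
    rewrite <- (RInt_minus (fun x => f x p) (fun x => f x p0)) by apply Hex.
    eapply Rle_lt_trans.
    + apply abs_RInt_le_const with (M := eps / (2 * (b - a))); [lra| |].
      * apply (ex_RInt_minus (fun x => f x p) (fun x => f x p0)); apply Hex.
      * intros x Hx. left. apply Rabs_def2 in Hp.
        apply (Hdelta x p0 x p); try lra.
        rewrite Rminus_eq_0, Rabs_R0. apply cond_pos.
    + pose proof (cond_pos eps). field_simplify; lra.
  - intros p _. split.
    + apply (@RInt_correct R_CompleteNormedModule), Hex.
    + apply RInt_gt_0; [exact Hab|auto|].
      intros x _. apply continuity_2d_pt_continuous_l, Hf.
Qed.

Lemma pos_param_integral_is_RInt (f : R -> R -> R) (a b c d : R) :
  c < d -> pos_param_integral f a b c d ->
  exists L, is_RInt (fun y => RInt (fun x => f x y) a b) c d L /\ 0 < L.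
Proof.
  intros Hcd [G [HG IG]].
  assert (HexG : ex_RInt G c d).
  { apply (@ex_RInt_continuous R_CompleteNormedModule). intros z Hz.
    rewrite Rmin_left, Rmax_right in Hz by lra. auto. }
  exists (RInt G c d). split.
  - apply (is_RInt_ext G).
    + intros y Hy. rewrite Rmin_left, Rmax_right in Hy by lra.
      symmetry. apply is_RInt_unique, IG, Hy.
    + apply (@RInt_correct R_CompleteNormedModule), HexG.
  - apply RInt_gt_0; auto. intros y Hy. apply IG, Hy.
Qed.

Lemma resist_density_cell (U V : R -> R -> R) (a b c d : R) :
  a < b -> 0 <= a -> b <= PI -> C1_2d V ->
  (forall x y, a <= x <= b -> c <= y <= d -> U x y = V x y) ->
  pos_param_integral (resist_density (partial1 U) (partial2 U)) a b c d.
Proof.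
  intros Hab Ha Hb HV HUV.
  apply (pos_param_integral_ext _ (resist_density (partial1 V) (partial2 V))); [lra| |].
  - intros x y Hx Hy. unfold resist_density.
    rewrite (partial1_eq_on_slice U V a b x y), (partial2_eq_on_slice U V c d x y); auto;
      intros t Ht; apply HUV; lra.
  - apply pos_param_integral_continuous; [exact Hab| |].
    + intros x y. apply resist_density_continuous; apply HV.
    + intros x y Hx. apply resist_density_pos, sin_gt_0; lra.
Qed.

Lemma Resist1_pos (Rad : R) (u : pt3 -> R) :
  0 < Rad < PI -> admissible Rad u -> 0 < Resist1 Rad u.
Proof.
  intros HRad [_ [_ [m [k [s [t [s0 [sm [Hs [t0 [tk [Ht Hcell]]]]]]]]]]]].
  rewrite Resist1_density. cbv zeta.
  set (f := resist_density _ _).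
  assert (Hm : (0 < m)%nat) by (destruct m; [rewrite s0 in sm; lra|lia]).
  assert (Hk : (0 < k)%nat)
    by (destruct k; [rewrite t0 in tk; pose proof PI_RGT_0; lra|lia]).
  assert (Hstrip : forall j, (j < k)%nat -> pos_param_integral f 0 Rad (t j) (t (S j))).
  { intros j Hj. rewrite <- s0, <- sm.
    apply (trans_along_partition (fun a b => pos_param_integral f a b _ _));
      [intros ? ? ?; apply pos_param_integral_chasles|exact Hm|].
    intros i Hi. destruct (Hcell i j Hi Hj) as [V [HV HUV]].
    apply (resist_density_cell _ V); auto.
    - rewrite <- s0. apply (increasing_partition_le s m Hs). lia.
    - assert (s (S i) <= s m) by (apply (increasing_partition_le s m Hs); lia). lra. }
  assert (Htotal : exists L,
      is_RInt (fun ph => RInt (fun th => f th ph) 0 Rad) (t 0%nat) (t k) L /\ 0 < L).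
  { apply (trans_along_partition
             (fun a b => exists L, is_RInt (fun ph => RInt (fun th => f th ph) 0 Rad) a b L /\ 0 < L));
      [|exact Hk|].
    - intros a b c [L1 [I1 P1]] [L2 [I2 P2]]. exists (L1 + L2). split; [|lra].
      exact (is_RInt_Chasles (V := R_NormedModule) _ _ _ _ _ _ I1 I2).
    - intros j Hj. apply pos_param_integral_is_RInt; auto. }
  rewrite t0, tk in Htotal. destruct Htotal as [L [IL PL]].
  now rewrite (is_RInt_unique _ _ _ _ IL).
Qed.

(* θ is recovered from a point of the sphere as acos of its third coordinate. *)
Definition cone (Rad k : R) (p : pt3) : R := k * (Rad - acos (snd p)).

Lemma cone_Psi (Rad k th ph : R) :
  0 <= th <= PI -> cone Rad k (Psi th ph) = k * (Rad - th).
Proof. intros Hth. unfold cone, Psi. simpl. now rewrite acos_cos. Qed.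

Lemma partial1_affine (k Rad x y : R) : partial1 (fun s _ => k * (Rad - s)) x y = - k.
Proof. apply is_derive_unique. auto_derive; auto. ring. Qed.

Lemma cone_admissible (Rad k : R) :
  0 < Rad < PI -> 0 <= k -> admissible Rad (cone Rad k).
Proof.
  intros HRad Hk. pose proof PI_RGT_0.
  split; [|split].
  - intros th ph Hth. rewrite cone_Psi by lra. nra.
  - intros ph. rewrite cone_Psi by lra. ring.
  - exists 1%nat, 1%nat, (fun i => match i with 0%nat => 0 | _ => Rad end),
      (fun j => match j with 0%nat => 0 | _ => 2 * PI end).
    do 2 (split; [reflexivity|]). split; [intros [|i] Hi; [lra|lia]|].
    do 2 (split; [reflexivity|]). split; [intros [|j] Hj; [lra|lia]|].
    intros [|i] [|j] Hi Hj; try lia.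
    exists (fun s _ => k * (Rad - s)). split.
    + intros x y. repeat split.
      * auto_derive; auto.
      * auto_derive; auto.
      * apply (continuity_2d_pt_ext (fun _ _ => - k)); [|apply continuity_2d_pt_const].
        intros s t. symmetry. exact (partial1_affine k Rad s t).
      * apply (continuity_2d_pt_ext (fun _ _ => 0)); [|apply continuity_2d_pt_const].
        intros. symmetry. apply Derive_const.
    + intros x y Hx _. cbv beta. rewrite cone_Psi; [reflexivity|lra].
Qed.

Lemma is_RInt_sin (a b : R) : is_RInt sin a b (cos a - cos b).
Proof.
  replace (cos a - cos b) with (minus ((fun x => - cos x) b) ((fun x => - cos x) a))
    by (unfold minus, plus, opp; simpl; ring).
  apply (is_RInt_derive (V := R_CompleteNormedModule) (fun x => - cos x) sin).
  - intros x _. auto_derive; [exact I|ring].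
  - intros x _. apply continuity_pt_filterlim, continuity_sin.
Qed.

Lemma Resist1_cone (Rad k : R) :
  0 < Rad < PI ->
  Resist1 Rad (cone Rad k) = 2 * PI * (1 - cos Rad) / (1 + k ^ 2).
Proof.
  intros HRad. pose proof PI_RGT_0.
  assert (Hk : 0 < 1 + k ^ 2) by nra.
  set (U := fun th ph => cone Rad k (Psi th ph)).
  assert (Hinner : forall ph,
      RInt (fun th => resist_density (partial1 U) (partial2 U) th ph) 0 Rad
      = (1 - cos Rad) / (1 + k ^ 2)).
  { intros ph. apply is_RInt_unique.
    apply (is_RInt_ext (fun th => scal (/ (1 + k ^ 2)) (sin th))).
    - intros th Hth. rewrite Rmin_left, Rmax_right in Hth by lra.
      unfold resist_density.
      assert (Hp1 : partial1 U th ph = - k).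
      { rewrite (partial1_eq_on_slice U (fun s _ => k * (Rad - s)) 0 PI); [|lra|].
        - apply partial1_affine.
        - intros s Hs. now apply cone_Psi. }
      assert (Hp2 : partial2 U th ph = 0).
      { rewrite (partial2_eq_on_slice U (fun _ _ => k * (Rad - th)) (ph - 1) (ph + 1)); [|lra|].
        - unfold partial2. apply Derive_const.
        - intros p _. apply cone_Psi. lra. }
      rewrite Hp1, Hp2.
      unfold scal; simpl; unfold mult; simpl. field.
      split; [apply Rgt_not_eq, sin_gt_0; lra|nra].
    - replace ((1 - cos Rad) / (1 + k ^ 2)) with (scal (/ (1 + k ^ 2)) (cos 0 - cos Rad))
        by (rewrite cos_0; unfold scal; simpl; unfold mult; simpl; field; lra).
      apply (is_RInt_scal (V := R_NormedModule)), is_RInt_sin. }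
  rewrite Resist1_density. cbv zeta. fold U.
  rewrite (RInt_ext _ (fun _ => (1 - cos Rad) / (1 + k ^ 2))) by (intros; apply Hinner).
  rewrite RInt_const. unfold scal; simpl; unfold mult; simpl. field. lra.
Qed.

Lemma Resist1_small (Rad r : R) :
  0 < Rad < PI -> 0 < r -> exists v, admissible Rad v /\ Resist1 Rad v < r.
Proof.
  intros HRad Hr. pose proof PI_RGT_0. pose proof (COS_bound Rad).
  set (C := 2 * PI * (1 - cos Rad)).
  assert (HC : 0 <= C) by (unfold C; nra).
  (* slope k = C / r makes C / (1 + k²) < C / k = r *)
  set (k := C / r).
  assert (Hk : 0 <= k) by (apply Rdiv_le_0_compat; lra).
  assert (Hkr : k * r = C) by (unfold k; field; lra).
  exists (cone Rad k). split; [now apply cone_admissible|].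
  rewrite Resist1_cone by exact HRad. fold C. apply Rlt_div_l; nra.
Qed.

Theorem proposition2p5 (Rad : R) (hRad : 0 < Rad < PI) :
  is_glb_Rbar (fun x => exists u, admissible Rad u /\ x = Resist1 Rad u) 0 /\
  ~ (exists u, admissible Rad u /\
       forall v, admissible Rad v -> Resist1 Rad u <= Resist1 Rad v).
Proof.
  split.
  - split.
    + intros x [u [Hu ->]]. simpl. left. now apply Resist1_pos.
    + intros [r| |] Hlb; simpl; auto.
      * destruct (Rle_lt_dec r 0) as [Hr|Hr]; [exact Hr|].
        destruct (Resist1_small Rad r hRad Hr) as [v [Hv Hlt]].
        specialize (Hlb (Resist1 Rad v) (ex_intro _ v (conj Hv eq_refl))).
        simpl in Hlb. lra.
      * destruct (Resist1_small Rad 1 hRad Rlt_0_1) as [v [Hv _]].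
        exact (Hlb (Resist1 Rad v) (ex_intro _ v (conj Hv eq_refl))).
  - intros [u [Hu Hmin]].
    destruct (Resist1_small Rad (Resist1 Rad u) hRad (Resist1_pos Rad u hRad Hu))
      as [v [Hv Hlt]].
    specialize (Hmin v Hv). lra.
Qed.
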